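(* Let $H$ be obtained from $F_4$ by adding a new vertex $v$ and joining it to three distinct vertices of $F_4$; let $S$ be the set of these three neighbours. If $H$ does not contain $K_{3,4}$ as a minor, then either $S$ contains two vertices adjacent in $F_4$, or $S=\{f^1_1,f^1_4,f^2\}$, or $S=\{f^2_1,f^2_4,f^1\}$. Moreover, if $S=\{f^1_1,f^1_4,f^2\}$ or $S=\{f^2_1,f^2_4,f^1\}$, then $H$ contains $\mathfrak{Q}^+$ as a minor.
   Context: $F_4$ is the graph with vertex set $\{f^1,f^2\}\cup\{f^i_j: i\in\{1,2\}, j\in\{1,2,3,4\}\}$ and the 16 edges: for each $i\in\{1,2\}$, $f^if^i_1$, $f^if^i_2$, $f^if^i_4$, $f^i_3f^i_1$, $f^i_3f^i_2$, $f^i_3f^i_4$; and $f^1_jf^2_{5-j}$ for $j=1,2,3,4$. $\mathfrak{Q}^+$ is the graph obtained from the cube $Q_3$ by adding a new vertex adjacent to three pairwise non-adjacent vertices of the cube. *)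

From mathcomp Require Import all_boot.
Set Implicit Arguments. Unset Strict Implicit. Unset Printing Implicit Defensive.

(* Simple graphs: a finType of vertices with a (symmetric, irreflexive) rel. *)

Definition induced_connected (T : finType) (e : rel T) (A : {set T}) : Prop :=
  forall a b, a \in A -> b \in A ->
    connect [rel u w | [&& u \in A, w \in A & e u w]] a b.

Definition has_minor (G : finType) (eG : rel G) (T : finType) (eT : rel T) : Prop :=
  exists phi : G -> {set T},
    [/\ (forall x, phi x != set0),
        (forall x y, x != y -> [disjoint phi x & phi y]),
        (forall x, induced_connected eT (phi x)) &
        (forall x y, eG x y -> exists a b, [/\ a \in phi x, b \in phi y & eT a b])].

(* Vertices of F_4: (i, j) with i : 'I_2 (i = 0 for superscript 1, i = 1 for
   superscript 2), j : 'I_5; j = 0 is f^i, j = 1..4 is f^i_j. *)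
Definition F4V := ('I_2 * 'I_5)%type.

Definition F4e0 (x y : F4V) : bool :=
  let: (i, j) := x in let: (i', j') := y in
  ((i == i' :> nat) && ((j == 0 :> nat) || (j == 3 :> nat)) && ((j' : nat) \in [:: 1; 2; 4]))
  || ((i != i' :> nat) && (j != 0 :> nat) && (j' != 0 :> nat) && (j + j' == 5)).

Definition F4e : rel F4V := fun x y => F4e0 x y || F4e0 y x.

Definition fv (i : 'I_2) : F4V := (i, ord0).
Definition fij (i : 'I_2) (j : nat) : F4V := (i, inord j).
Definition i1 : 'I_2 := ord0.
Definition i2 : 'I_2 := ord_max.

Definition addv_e (S : {set F4V}) : rel (option F4V) := fun x y =>
  match x, y with
  | Some a, Some b => F4e a b
  | None, Some b => b \in S
  | Some a, None => a \in S
  | None, None => false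
  end.

Definition K34e : rel ('I_3 + 'I_4)%type := fun x y =>
  match x, y with
  | inl _, inr _ => true
  | inr _, inl _ => true
  | _, _ => false
  end.

(* Q^+: cube Q_3 on {ffun 'I_3 -> bool} (adjacent iff differ in exactly one
   coordinate), plus a new vertex None adjacent to the three weight-2 vertices
   (pairwise non-adjacent; any such triple is equivalent under Aut(Q_3)). *)
Definition cubeV := {ffun 'I_3 -> bool}.
Definition cube_e : rel cubeV := fun u v => #|[pred i | u i != v i]| == 1.
Definition Qplus_e : rel (option cubeV) := fun x y =>
  match x, y with
  | Some u, Some v => cube_e u v
  | None, Some v => #|[pred i | v i]| == 2
  | Some u, None => #|[pred i | u i]| == 2
  | None, None => false
  end.

From mathcomp Require Import all_boot zify.

Set Implicit Arguments. Unset Strict Implicit. Unset Printing Implicit Defensive.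

(* Both halves are finite checks on explicit minor models.  Besides the two
   exceptional triples, F_4 has 26 independent sets of size three, and for each
   of them seven branch sets exhibit a K_{3,4} minor of H; for the exceptional
   triples nine branch sets, all singletons but one contracted edge of F_4,
   exhibit Q^+.  A branch set is certified connected by listing it so that every
   vertex is adjacent to an earlier one, and the branch sets are indexed through
   an injective numbering of the vertices of the minor, so that the checks run
   on lists and naturals only. *)

Lemma eq_has_minor (G : finType) (eG : rel G) (T : finType) (e e' : rel T) :
  e =2 e' -> has_minor eG e -> has_minor eG e'.
Proof.
move=> ee' [phi [nz dis con adj]]; exists phi; split=> // [x a b Ha Hb|x y /adj].
- have ind_ee' : [rel u w | [&& u \in phi x, w \in phi x & e u w]] =2
                 [rel u w | [&& u \in phi x, w \in phi x & e' u w]].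
    by move=> u w /=; rewrite ee'.
  by rewrite -(eq_connect ind_ee'); apply: con.
- by case=> a [b [Ha Hb eab]]; exists a, b; rewrite -ee'.
Qed.

Section GrowingOrder.
Variables (T : finType) (e : rel T).

Fixpoint grows_connected (seen r : seq T) : bool :=
  if r is y :: r' then has (fun s => e s y && e y s) seen && grows_connected (y :: seen) r'
  else true.

Definition connectedb (l : seq T) : bool :=
  if l is x :: r then grows_connected [:: x] r else true.

Section Linked.
Variable A : {set T}.
Let E := [rel u w | [&& u \in A, w \in A & e u w]].

Lemma grows_connected_linked h seen r :
  grows_connected seen r -> {subset r <= A} ->
  (forall s, s \in seen -> [/\ s \in A, connect E h s & connect E s h]) ->
  forall t, t \in r -> connect E h t /\ connect E t h.
Proof.
elim: r seen => [//|y r IHr] seen /= /andP[/hasP[s s_seen /andP[esy eys]] grow_r] rA seenA.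
have yA : y \in A by apply: rA; rewrite inE eqxx.
have [sA hs sh] := seenA s s_seen.
have hy : connect E h y by apply: connect_trans hs (connect1 _); rewrite /= sA yA.
have yh : connect E y h by apply: connect_trans _ sh; apply: connect1; rewrite /= sA yA.
move=> t; rewrite inE => /predU1P[-> //|t_r].
apply: (IHr (y :: seen)) t_r => // [z z_r|z]; first by apply: rA; rewrite inE z_r orbT.
by rewrite inE => /predU1P[->|/seenA].
Qed.

End Linked.

Lemma connectedb_induced l : connectedb l -> induced_connected e [set t in l].
Proof.
case: l => [_ a b|h r grow a b]; first by rewrite inE.
set E := [rel u w | _].
have linked t : t \in h :: r -> connect E h t /\ connect E t h.
  rewrite inE => /predU1P[->|t_r]; first by split; apply: connect0.
  apply: (grows_connected_linked grow) t_r => [z z_r|s].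
    by rewrite !inE z_r orbT.
  by rewrite inE => /eqP->; split; [rewrite !inE eqxx | apply: connect0 ..].
rewrite !inE => /linked[_ ah] /linked[hb _].
exact: connect_trans ah hb.
Qed.

End GrowingOrder.

Section Certificate.
Variables (T : finType) (e : rel T) (n : nat) (code_rel : rel nat).

(* [nth [::] W i] is the branch set of the vertex of the minor with code [i]. *)
Definition minor_certificate (W : seq (seq T)) : bool :=
  let B i := nth [::] W i in
  [&& all (fun i => B i != [::]) (iota 0 n),
      all (fun i => all (fun j => (i == j) || ~~ has (mem (B j)) (B i)) (iota 0 n)) (iota 0 n),
      all (fun i => connectedb e (B i)) (iota 0 n) &
      all (fun i => all (fun j => code_rel i j ==> has (fun a => has (e a) (B j)) (B i))
                      (iota 0 n)) (iota 0 n)].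

Variables (G : finType) (eG : rel G) (code : G -> nat).
Hypotheses (code_inj : injective code) (code_lt : forall x, code x < n).
Hypothesis code_edge : forall x y, eG x y -> code_rel (code x) (code y).

Lemma minor_certificateP W : minor_certificate W -> has_minor eG e.
Proof.
move=> /and4P[/allP nzW /allP disW /allP conW /allP adjW].
have code_iota x : code x \in iota 0 n by rewrite mem_iota add0n code_lt.
exists (fun x => [set t in nth [::] W (code x)]); split.
- move=> x; have := nzW _ (code_iota x).
  by case: (nth [::] W (code x)) => [//|t l] _; apply/set0Pn; exists t; rewrite !inE eqxx.
- move=> x y x_ne_y; have := allP (disW _ (code_iota x)) _ (code_iota y).
  rewrite (inj_eq code_inj) (negbTE x_ne_y) /= => /hasPn disj.
  by rewrite disjoint_subset; apply/subsetP => t; rewrite !inE => /disj.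
- by move=> x; apply/connectedb_induced/conW.
- move=> x y /code_edge exy; have := allP (adjW _ (code_iota x)) _ (code_iota y).
  by rewrite exy => /hasP[a Ha /hasP[b Hb eab]]; exists a, b; rewrite !inE.
Qed.

End Certificate.

Lemma card3_seq (T : finType) (S : {set T}) :
  #|S| = 3 -> exists a b c, uniq [:: a; b; c] /\ S =i [:: a; b; c].
Proof.
move=> S3; have S_enum : S =i enum S by move=> x; rewrite mem_enum.
move: (enum_uniq S) (cardE S) S_enum; rewrite S3.
by case: (enum S) => [|a [|b [|c [|]]]] // u _ S_abc; exists a, b, c.
Qed.

(* [vtx i j] is [f^i_j] for [j] in 1..4 and [f^i] for [j = 0].  Unlike [fij]
   it does not go through [inord], which [vm_compute] cannot evaluate. *)
Definition vtx (i j : nat) : F4V :=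
  (if i is 1 then ord0 else ord_max,
   match j with
   | 0 => ord0 | 1 => Ordinal (isT : 1 < 5) | 2 => Ordinal (isT : 2 < 5)
   | 3 => Ordinal (isT : 3 < 5) | _ => ord_max
   end).

Lemma fij_vtx (i : 'I_2) j : j < 5 -> fij i j = vtx i.+1 j.
Proof.
move=> j_lt5; congr pair; apply: val_inj.
- by case: i => [[|[|]]].
- by rewrite /= inordK //; case: j j_lt5 => [|[|[|[|[|]]]]].
Qed.

Lemma fv_vtx i : fv i = vtx i.+1 0.
Proof. by congr pair; apply: val_inj; case: i => [[|[|]]]. Qed.

Definition F4_vertices : seq F4V := [seq vtx i j | i <- [:: 1; 2], j <- iota 0 5].

Lemma mem_F4_vertices x : x \in F4_vertices.
Proof.
case: x => [[i lti] [j ltj]].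
by case: i lti => [|[|//]] ?; case: j ltj => [|[|[|[|[|//]]]]] ?.
Qed.

Definition hvtx (i j : nat) : option F4V := Some (vtx i j).
Definition hnew : option F4V := None.

Definition addv_seq (l : seq F4V) : rel (option F4V) := fun x y =>
  match x, y with
  | Some a, Some b => F4e a b
  | None, Some b => b \in l
  | Some a, None => a \in l
  | None, None => false
  end.

Lemma has_minor_addv_seq (G : finType) (eG : rel G) (S : {set F4V}) (l : seq F4V) :
  S =i l -> has_minor eG (addv_seq l) -> has_minor eG (addv_e S).
Proof. by move=> Sl; apply: eq_has_minor => -[a|] [b|] //=; rewrite Sl. Qed.

Definition Q_triple1 : seq F4V := [:: vtx 1 1; vtx 1 4; vtx 2 0].
Definition Q_triple2 : seq F4V := [:: vtx 2 1; vtx 2 4; vtx 1 0].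

Lemma Q_triple1E : [set fij i1 1; fij i1 4; fv i2] =i Q_triple1.
Proof. by move=> x; rewrite !inE !fij_vtx // fv_vtx orbA. Qed.

Lemma Q_triple2E : [set fij i2 1; fij i2 4; fv i1] =i Q_triple2.
Proof. by move=> x; rewrite !inE !fij_vtx // fv_vtx orbA. Qed.

Definition k34_code (x : 'I_3 + 'I_4) : nat :=
  match x with inl i => i | inr j => 3 + j end.

Definition k34_code_rel (i j : nat) : bool := (i < 3) != (j < 3).

Lemma k34_code_inj : injective k34_code.
Proof.
case=> [i|i] [j|j] /= eq_ij; have := ltn_ord i; have := ltn_ord j; try lia.
- by move=> _ _; congr inl; apply: val_inj.
- by move=> _ _; congr inr; apply: val_inj => /=; lia.
Qed.

Lemma k34_code_lt x : k34_code x < 7.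
Proof. by case: x => [i|i] /=; move: (ltn_ord i); lia. Qed.

Lemma k34_code_edge x y : K34e x y -> k34_code_rel (k34_code x) (k34_code y).
Proof. by case: x y => [i|i] [j|j] //= _; rewrite /k34_code_rel ltn_ord ltnNge leq_addr. Qed.

(* The first three branch sets form the side of size 3 of K_{3,4}. *)
Definition k34_certificates : seq (seq F4V * seq (seq (option F4V))) := [::
  ([:: vtx 1 0; vtx 1 3; vtx 2 0],
   [:: [:: hvtx 1 0]; [:: hvtx 1 3]; [:: hvtx 2 0; hvtx 2 1]; [:: hvtx 1 1; hvtx 2 4]; [:: hvtx 1 2; hvtx 2 3]; [:: hvtx 1 4]; [:: hnew]]);
  ([:: vtx 1 0; vtx 1 3; vtx 2 1],
   [:: [:: hvtx 1 0]; [:: hvtx 1 3]; [:: hvtx 2 1; hvtx 2 3]; [:: hvtx 1 1; hvtx 2 4]; [:: hvtx 1 2]; [:: hvtx 1 4]; [:: hnew]]);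
  ([:: vtx 1 0; vtx 1 3; vtx 2 3],
   [:: [:: hvtx 1 0]; [:: hvtx 1 3]; [:: hvtx 2 3]; [:: hvtx 1 1; hvtx 2 4]; [:: hvtx 1 2]; [:: hvtx 1 4; hvtx 2 1]; [:: hnew]]);
  ([:: vtx 1 0; vtx 1 3; vtx 2 4],
   [:: [:: hvtx 1 0]; [:: hvtx 1 3]; [:: hvtx 2 3; hvtx 2 4]; [:: hvtx 1 1]; [:: hvtx 1 2]; [:: hvtx 1 4; hvtx 2 1]; [:: hnew]]);
  ([:: vtx 1 0; vtx 2 0; vtx 2 3],
   [:: [:: hvtx 1 0; hvtx 1 1; hvtx 1 3; hvtx 1 4]; [:: hvtx 2 0]; [:: hvtx 2 3]; [:: hvtx 2 1]; [:: hvtx 2 2]; [:: hvtx 2 4]; [:: hnew]]);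
  ([:: vtx 1 0; vtx 2 1; vtx 2 2],
   [:: [:: hvtx 1 0; hvtx 1 1; hvtx 2 4]; [:: hvtx 2 1]; [:: hvtx 2 2]; [:: hvtx 1 3; hvtx 1 4]; [:: hvtx 2 0]; [:: hvtx 2 3]; [:: hnew]]);
  ([:: vtx 1 0; vtx 2 2; vtx 2 4],
   [:: [:: hvtx 1 0; hvtx 1 4; hvtx 2 1]; [:: hvtx 2 2]; [:: hvtx 2 4]; [:: hvtx 1 1; hvtx 1 3]; [:: hvtx 2 0]; [:: hvtx 2 3]; [:: hnew]]);
  ([:: vtx 1 1; vtx 1 2; vtx 1 4],
   [:: [:: hvtx 1 1; hvtx 2 4]; [:: hvtx 1 2]; [:: hvtx 1 4; hvtx 2 1]; [:: hvtx 1 0]; [:: hvtx 1 3]; [:: hvtx 2 3]; [:: hnew]]);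
  ([:: vtx 1 1; vtx 1 2; vtx 2 0],
   [:: [:: hvtx 1 1; hvtx 1 3; hvtx 1 4]; [:: hvtx 1 2; hvtx 2 3]; [:: hvtx 2 0]; [:: hvtx 2 1]; [:: hvtx 2 2]; [:: hvtx 2 4]; [:: hnew]]);
  ([:: vtx 1 1; vtx 1 2; vtx 2 1],
   [:: [:: hvtx 1 1; hvtx 2 4]; [:: hvtx 1 2]; [:: hvtx 1 4; hvtx 2 1]; [:: hvtx 1 0]; [:: hvtx 1 3]; [:: hvtx 2 3]; [:: hnew]]);
  ([:: vtx 1 1; vtx 1 2; vtx 2 2],
   [:: [:: hvtx 1 0; hvtx 1 1; hvtx 1 4]; [:: hvtx 1 2; hvtx 2 3]; [:: hvtx 2 0; hvtx 2 2]; [:: hvtx 1 3]; [:: hvtx 2 1]; [:: hvtx 2 4]; [:: hnew]]);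
  ([:: vtx 1 1; vtx 1 4; vtx 2 2],
   [:: [:: hvtx 1 1; hvtx 2 4]; [:: hvtx 1 4; hvtx 2 1]; [:: hvtx 2 2]; [:: hvtx 1 3]; [:: hvtx 2 0]; [:: hvtx 2 3]; [:: hnew]]);
  ([:: vtx 1 1; vtx 1 4; vtx 2 3],
   [:: [:: hvtx 1 1; hvtx 2 4]; [:: hvtx 1 2; hvtx 2 3]; [:: hvtx 1 4]; [:: hvtx 1 0]; [:: hvtx 1 3]; [:: hvtx 2 0; hvtx 2 1]; [:: hnew]]);
  ([:: vtx 1 1; vtx 2 0; vtx 2 3],
   [:: [:: hvtx 1 1; hvtx 1 3; hvtx 1 4]; [:: hvtx 2 0]; [:: hvtx 2 3]; [:: hvtx 2 1]; [:: hvtx 2 2]; [:: hvtx 2 4]; [:: hnew]]);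
  ([:: vtx 1 1; vtx 2 1; vtx 2 2],
   [:: [:: hvtx 1 1; hvtx 2 4]; [:: hvtx 2 1]; [:: hvtx 2 2]; [:: hvtx 1 3; hvtx 1 4]; [:: hvtx 2 0]; [:: hvtx 2 3]; [:: hnew]]);
  ([:: vtx 1 2; vtx 1 4; vtx 2 0],
   [:: [:: hvtx 1 1; hvtx 1 3; hvtx 1 4]; [:: hvtx 1 2; hvtx 2 3]; [:: hvtx 2 0]; [:: hvtx 2 1]; [:: hvtx 2 2]; [:: hvtx 2 4]; [:: hnew]]);
  ([:: vtx 1 2; vtx 1 4; vtx 2 2],
   [:: [:: hvtx 1 0; hvtx 1 1; hvtx 1 2; hvtx 2 4]; [:: hvtx 1 4; hvtx 2 1]; [:: hvtx 2 2]; [:: hvtx 1 3]; [:: hvtx 2 0]; [:: hvtx 2 3]; [:: hnew]]);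
  ([:: vtx 1 2; vtx 1 4; vtx 2 4],
   [:: [:: hvtx 1 1; hvtx 2 4]; [:: hvtx 1 2]; [:: hvtx 1 4; hvtx 2 1]; [:: hvtx 1 0]; [:: hvtx 1 3]; [:: hvtx 2 3]; [:: hnew]]);
  ([:: vtx 1 2; vtx 2 1; vtx 2 2],
   [:: [:: hvtx 1 0; hvtx 1 1; hvtx 1 2; hvtx 2 4]; [:: hvtx 2 1]; [:: hvtx 2 2]; [:: hvtx 1 3; hvtx 1 4]; [:: hvtx 2 0]; [:: hvtx 2 3]; [:: hnew]]);
  ([:: vtx 1 2; vtx 2 1; vtx 2 4],
   [:: [:: hvtx 1 1; hvtx 2 4]; [:: hvtx 1 2]; [:: hvtx 1 4; hvtx 2 1]; [:: hvtx 1 0]; [:: hvtx 1 3]; [:: hvtx 2 3]; [:: hnew]]);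
  ([:: vtx 1 2; vtx 2 2; vtx 2 4],
   [:: [:: hvtx 1 0; hvtx 1 2; hvtx 1 4; hvtx 2 1]; [:: hvtx 2 2]; [:: hvtx 2 4]; [:: hvtx 1 1; hvtx 1 3]; [:: hvtx 2 0]; [:: hvtx 2 3]; [:: hnew]]);
  ([:: vtx 1 3; vtx 2 0; vtx 2 3],
   [:: [:: hvtx 1 1; hvtx 1 3; hvtx 1 4]; [:: hvtx 2 0]; [:: hvtx 2 3]; [:: hvtx 2 1]; [:: hvtx 2 2]; [:: hvtx 2 4]; [:: hnew]]);
  ([:: vtx 1 3; vtx 2 1; vtx 2 4],
   [:: [:: hvtx 1 3; hvtx 2 2]; [:: hvtx 2 1]; [:: hvtx 2 4]; [:: hvtx 1 0; hvtx 1 1; hvtx 1 4]; [:: hvtx 2 0]; [:: hvtx 2 3]; [:: hnew]]);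
  ([:: vtx 1 4; vtx 2 0; vtx 2 3],
   [:: [:: hvtx 1 1; hvtx 1 3; hvtx 1 4]; [:: hvtx 2 0]; [:: hvtx 2 3]; [:: hvtx 2 1]; [:: hvtx 2 2]; [:: hvtx 2 4]; [:: hnew]]);
  ([:: vtx 1 4; vtx 2 2; vtx 2 4],
   [:: [:: hvtx 1 4; hvtx 2 1]; [:: hvtx 2 2]; [:: hvtx 2 4]; [:: hvtx 1 1; hvtx 1 3]; [:: hvtx 2 0]; [:: hvtx 2 3]; [:: hnew]]);
  ([:: vtx 2 1; vtx 2 2; vtx 2 4],
   [:: [:: hvtx 2 1]; [:: hvtx 2 2]; [:: hvtx 2 4]; [:: hvtx 1 1; hvtx 1 3; hvtx 1 4]; [:: hvtx 2 0]; [:: hvtx 2 3]; [:: hnew]])].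

Definition k34_certificate (l : seq F4V) : seq (seq (option F4V)) :=
  nth [::] (map snd k34_certificates) (find (fun p => perm_eq p.1 l) k34_certificates).

Definition classified (l : seq F4V) : bool :=
  [|| has (fun x => has (F4e x) l) l, perm_eq l Q_triple1, perm_eq l Q_triple2
    | minor_certificate (addv_seq l) 7 k34_code_rel (k34_certificate l)].

Lemma all_triples_classified :
  all (fun a => all (fun b => all (fun c => ~~ uniq [:: a; b; c] || classified [:: a; b; c])
    F4_vertices) F4_vertices) F4_vertices.
Proof. by vm_compute. Qed.

Lemma triple_classified a b c : uniq [:: a; b; c] -> classified [:: a; b; c].
Proof.
move=> abc; have /allP/(_ a (mem_F4_vertices a)) := all_triples_classified.
move=> /allP/(_ b (mem_F4_vertices b))/allP/(_ c (mem_F4_vertices c)).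
by rewrite abc.
Qed.

Definition cube_code (u : cubeV) : nat := 4 * u ord0 + 2 * u (inord 1) + u ord_max.

Definition qplus_code (x : option cubeV) : nat := if x is Some u then cube_code u else 8.

Definition bits (i : nat) : seq bool := [:: odd i./2./2; odd i./2; odd i].

Definition qplus_code_rel (i j : nat) : bool :=
  if i == 8 then (j < 8) && (count id (bits j) == 2)
  else if j == 8 then (i < 8) && (count id (bits i) == 2)
  else [&& i < 8, j < 8 & count id [seq p.1 != p.2 | p <- zip (bits i) (bits j)] == 1].

Lemma card_ord3 (P : pred 'I_3) : #|[pred i | P i]| = P ord0 + P (inord 1) + P ord_max.
Proof.
rewrite -sum1_card big_mkcond /= !big_ord_recl big_ord0 addn0 addnA !inE.
by congr (_ + (if P _ then _ else _) + (if P _ then _ else _)); apply: val_inj; rewrite /= ?inordK.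
Qed.

Lemma ord3_cases (i : 'I_3) : [\/ i = ord0, i = inord 1 | i = ord_max].
Proof.
case: i => [[|[|[|//]]] lti]; [apply: Or31 | apply: Or32 | apply: Or33];
  by apply: val_inj; rewrite /= ?inordK.
Qed.

Lemma cube_code_inj : injective cube_code.
Proof.
move=> u v uv; apply/ffunP => i; move: uv; rewrite /cube_code.
by case: (ord3_cases i) => ->; case: (u _) (u _) (u _) (v _) (v _) (v _) => [] [] [] [] [] [].
Qed.

Lemma qplus_code_inj : injective qplus_code.
Proof.
case=> [u|] [v|] //=.
- by move/cube_code_inj->.
- by rewrite /cube_code; case: (u _) (u _) (u _) => [] [] [].
- by rewrite /cube_code; case: (v _) (v _) (v _) => [] [] [].
Qed.

Lemma qplus_code_lt x : qplus_code x < 9.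
Proof. by case: x => [u|] //=; rewrite /cube_code; case: (u _) (u _) (u _) => [] [] []. Qed.

Lemma qplus_code_edge x y : Qplus_e x y -> qplus_code_rel (qplus_code x) (qplus_code y).
Proof.
case: x y => [u|] [v|] //=; rewrite /cube_e ?card_ord3 /cube_code.
- by case: (u _) (u _) (u _) (v _) (v _) (v _) => [] [] [] [] [] [].
- by case: (u _) (u _) (u _) => [] [] [].
- by case: (v _) (v _) (v _) => [] [] [].
Qed.

(* Branch sets in the order of [qplus_code]: the cube vertex with bits [b0 b1 b2]
   comes at position [4 b0 + 2 b1 + b2], the apex of [Q^+] last. *)
Definition qplus_certificate1 : seq (seq (option F4V)) :=
  [:: [:: hvtx 2 0]; [:: hvtx 2 1]; [:: hvtx 2 4]; [:: hvtx 1 2; hvtx 2 3]; [:: hnew];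
      [:: hvtx 1 4]; [:: hvtx 1 1]; [:: hvtx 1 0]; [:: hvtx 1 3]].

Definition qplus_certificate2 : seq (seq (option F4V)) :=
  [:: [:: hvtx 1 0]; [:: hvtx 1 1]; [:: hvtx 1 4]; [:: hvtx 1 3; hvtx 2 2]; [:: hnew];
      [:: hvtx 2 4]; [:: hvtx 2 1]; [:: hvtx 2 0]; [:: hvtx 2 3]].

Lemma qplus_certificate1_ok :
  minor_certificate (addv_seq Q_triple1) 9 qplus_code_rel qplus_certificate1.
Proof. by vm_compute. Qed.

Lemma qplus_certificate2_ok :
  minor_certificate (addv_seq Q_triple2) 9 qplus_code_rel qplus_certificate2.
Proof. by vm_compute. Qed.

Theorem lemma4p12 (S : {set F4V}) (hS : #|S| = 3) :
  (~ has_minor K34e (addv_e S) ->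
     [\/ (exists x y, [/\ x \in S, y \in S & F4e x y]),
         S = [set fij i1 1; fij i1 4; fv i2] |
         S = [set fij i2 1; fij i2 4; fv i1]])
  /\
  ((S = [set fij i1 1; fij i1 4; fv i2] \/ S = [set fij i2 1; fij i2 4; fv i1]) ->
     has_minor Qplus_e (addv_e S)).
Proof.
split=> [noK34|].
  have [a [b [c [abc S_abc]]]] := card3_seq hS.
  case/or4P: (triple_classified abc) => [/hasP[x Sx /hasP[y Sy exy]]|Q1|Q2|cert].
  - by apply: Or31; exists x, y; rewrite !S_abc.
  - by apply: Or32; apply/setP => x; rewrite Q_triple1E S_abc (perm_mem Q1).
  - by apply: Or33; apply/setP => x; rewrite Q_triple2E S_abc (perm_mem Q2).
  - case: noK34; apply: has_minor_addv_seq S_abc _.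
    exact: minor_certificateP k34_code_inj k34_code_lt k34_code_edge _ cert.
case=> ->.
- apply: has_minor_addv_seq Q_triple1E _.
  exact: minor_certificateP qplus_code_inj qplus_code_lt qplus_code_edge _ qplus_certificate1_ok.
- apply: has_minor_addv_seq Q_triple2E _.
  exact: minor_certificateP qplus_code_inj qplus_code_lt qplus_code_edge _ qplus_certificate2_ok.
Qed.
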